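(* For every integer $i\geq 1$ and all positive integers $n_1,\ldots,n_{i+1}$, the complete $(i+1)$-partite graph $K=K_{n_1,\ldots,n_{i+1}}$ satisfies $\mathrm{lw}_i(K)\geq \min_{1\le j\le i+1} n_j+1$ and $\mathrm{lw}_{i+1}(K)=i+1$.
   Context: All graphs are finite, simple and undirected. For vertices $u,v$ of a connected graph, the interval $I(u,v)$ is the set of vertices lying on some shortest $(u,v)$-path. A set $S$ of vertices is (geodesically) convex if $I(u,v)\subseteq S$ for all $u,v\in S$. A graph $M$ is median if it is connected and for any three vertices $u,v,w$ we have $|I(u,v)\cap I(v,w)\cap I(w,u)|=1$. A median decomposition of a graph $G$ is a pair $(M,\mathcal{X})$ where $M$ is a median graph and $\mathcal{X}=(X_a)_{a\in V(M)}$ is a family of subsets of $V(G)$ (bags) such that (M1) for every edge $uv\in E(G)$ there is $a\in V(M)$ with $u,v\in X_a$, and (M2) for every $v\in V(G)$ the set $\{a\in V(M): v\in X_a\}$ is non-empty and convex in $M$. Its width is $\max_{a\in V(M)}|X_a|$. A $k$-lattice is a Cartesian product of $k$ (finite) paths. The lattice dimension of a graph $M$ is the least $k$ such that $M$ admits an isometric (distance-preserving) embedding into a $k$-lattice. For $i\geq1$, an $i$-lattice decomposition of $G$ is a median decomposition $(M,\mathcal{X})$ of $G$ with $M$ of lattice dimension at most $i$, and the $i$-latticewidth $\mathrm{lw}_i(G)$ is the minimum width of an $i$-lattice decomposition of $G$. *)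

From HB Require Import structures.
From mathcomp Require Import all_boot all_order.
Set Implicit Arguments. Unset Strict Implicit. Unset Printing Implicit Defensive.

Definition simple_graph (T : finType) (e : rel T) : Prop :=
  symmetric e /\ irreflexive e.

Definition connected (T : finType) (e : rel T) : Prop :=
  forall x y : T, connect e x y.

Fixpoint ball (T : finType) (e : rel T) (d : nat) (x : T) : {set T} :=
  match d with
  | 0 => [set x]
  | d'.+1 => ball e d' x :|: [set y | [exists z in ball e d' x, e z y]]
  end.

(* Shortest-path distance (equals #|T| when y is unreachable from x). *)
Definition dist (T : finType) (e : rel T) (x y : T) : nat :=
  find (fun d => y \in ball e d x) (iota 0 #|T|).

Definition interval (T : finType) (e : rel T) (u v : T) : {set T} :=
  [set w | dist e u w + dist e w v == dist e u v].

Definition convex (T : finType) (e : rel T) (S : {set T}) : Prop :=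
  forall u v, u \in S -> v \in S -> interval e u v \subset S.

Definition median_graph (T : finType) (e : rel T) : Prop :=
  simple_graph e /\ connected e /\
  forall u v w : T,
    #|interval e u v :&: interval e v w :&: interval e w u| = 1.

Definition median_decomposition (V : finType) (eG : rel V)
    (M : finType) (eM : rel M) (X : M -> {set V}) : Prop :=
  median_graph eM /\
  (forall u v : V, eG u v -> exists a : M, u \in X a /\ v \in X a) /\
  (forall v : V, (exists a : M, v \in X a) /\ convex eM [set a | v \in X a]).

Definition width (V M : finType) (X : M -> {set V}) : nat :=
  \max_(a : M) #|X a|.

(* The k-lattice P_{m 0} x ... x P_{m (k-1)}: Cartesian product of paths,
   where the path P_m has vertex set 'I_m and edges between consecutive
   integers. *)
Definition lattice_vertex (k : nat) (m : 'I_k -> nat) : finType :=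
  {dffun forall j : 'I_k, 'I_(m j)}.

Definition path_adj (n : nat) (a b : 'I_n) : bool :=
  ((val a).+1 == val b) || ((val b).+1 == val a).

Definition lattice_adj (k : nat) (m : 'I_k -> nat) : rel (lattice_vertex m) :=
  fun f g => [exists j, path_adj (f j) (g j) &&
                        [forall j', (j' != j) ==> (val (f j') == val (g j'))]].

Definition lattice_dim_le (M : finType) (eM : rel M) (k : nat) : Prop :=
  exists k', k' <= k /\
  exists (m : 'I_k' -> nat) (phi : M -> lattice_vertex m),
    forall x y : M, dist (@lattice_adj k' m) (phi x) (phi y) = dist eM x y.

Definition lattice_decomposition (i : nat) (V : finType) (eG : rel V)
    (M : finType) (eM : rel M) (X : M -> {set V}) : Prop :=
  median_decomposition eG eM X /\ lattice_dim_le eM i.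

Definition lw_ge (i : nat) (V : finType) (eG : rel V) (w : nat) : Prop :=
  forall (M : finType) (eM : rel M) (X : M -> {set V}),
    lattice_decomposition i eG eM X -> w <= width X.

Definition lw_eq (i : nat) (V : finType) (eG : rel V) (w : nat) : Prop :=
  lw_ge i eG w /\
  exists (M : finType) (eM : rel M) (X : M -> {set V}),
    lattice_decomposition i eG eM X /\ width X = w.

Definition Kvert (p : nat) (n : 'I_p -> nat) : finType :=
  {j : 'I_p & 'I_(n j)}.

Definition Kadj (p : nat) (n : 'I_p -> nat) : rel (Kvert n) :=
  fun u v => tag u != tag v.

(* In a lattice the graph distance is the l1-distance, so intervals are
   coordinatewise boxes and lattices are median graphs.  Convex sets of a median
   graph have the Helly property, hence any set of vertices that pairwise share
   a bag lies in a single bag.  For the clique of part representatives this gives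
   lw_{i+1}(K) >= i+1, and the (i+1)-lattice prod_j [n_j], whose bag at f picks
   the f(j)-th vertex of every part j, attains it.
   For lw_i, either the vertices of some part j pairwise share bags, and adding
   one vertex from another part yields a bag of size n_j + 1, or every part j has
   two vertices whose (convex) sets of bags are disjoint.  Disjoint convex sets
   of a median graph embedded in a lattice are separated along a coordinate, so
   with only i coordinates for i+1 parts two parts j1, j2 are separated along the
   same coordinate c.  But every vertex of j1 is adjacent to every vertex of j2,
   so their sets of bags meet, and the two separations along c cross. *)

From mathcomp Require Import all_boot all_order zify.
Set Implicit Arguments. Unset Strict Implicit. Unset Printing Implicit Defensive.

Definition distn (x y : nat) := (x - y) + (y - x).

Definition betweenn (x y z : nat) := (x <= y <= z) || (z <= y <= x).

Lemma distn_triangle_leqif x y z :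
  distn x z <= distn x y + distn y z ?= iff betweenn x y z.
Proof. by rewrite /leqif /distn /betweenn; split; lia. Qed.

Lemma betweenn_same x y : betweenn x y x -> y = x.
Proof. rewrite /betweenn; lia. Qed.

Definition stepn x y := if x < y then y.-1 else y.+1.

Lemma stepn_ltn x y N : x < N -> y < N -> x != y -> stepn x y < N.
Proof. rewrite /stepn; case: (ltnP x y); lia. Qed.

Lemma distn_stepn x y S : x != y -> distn x (stepn x y) + S = (distn x y + S).-1.
Proof. rewrite /distn /stepn; case: (ltnP x y); lia. Qed.

Lemma stepn_adj x y : x != y -> ((stepn x y).+1 == y) || (y.+1 == stepn x y).
Proof. rewrite /stepn; case: (ltnP x y); lia. Qed.

Definition median3n x y z := maxn (minn x y) (minn (maxn x y) z).

Lemma median3n_ltn x y z N : x < N -> y < N -> z < N -> median3n x y z < N.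
Proof. rewrite /median3n; lia. Qed.

Lemma median3n_betweenn x y z (c := median3n x y z) :
  [/\ betweenn x c y, betweenn y c z & betweenn z c x].
Proof. by rewrite /c /median3n /betweenn; split; lia. Qed.

Lemma betweenn_median3n x y z c :
  betweenn x c y -> betweenn y c z -> betweenn z c x -> c = median3n x y z.
Proof. rewrite /median3n /betweenn; lia. Qed.

Lemma sum_predn_lt_prod (I : Type) (s : seq I) (F : I -> nat) :
  (forall i, 0 < F i) -> \sum_(i <- s) (F i).-1 < \prod_(i <- s) F i.
Proof.
move=> F_gt0; elim: s => [|a s IHs]; first by rewrite !big_nil.
by rewrite !big_cons; have := F_gt0 a; nia.
Qed.

Lemma find_iota_leq a N : a < N -> find (leq a) (iota 0 N) = a.
Proof.
move=> ltaN; rewrite -(subnKC (ltnW ltaN)) iotaD find_cat size_iota /=.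
have -> : has (leq a) (iota 0 a) = false by apply/hasPn => x; rewrite mem_iota; lia.
by case: (N - a) (subn_gt0 a N) => [|d]; rewrite ?ltaN //= leqnn addn0.
Qed.

Section Graph.
Variables (T : finType) (e : rel T).

Lemma dist_eq0 x y : dist e x y = 0 -> x = y.
Proof.
rewrite /dist => dxy0.
have T_gt0 : 0 < #|T| by apply/card_gt0P; exists x.
have has_ball : has (fun d => y \in ball e d x) (iota 0 #|T|).
  by rewrite has_find size_iota dxy0.
by have := nth_find 0 has_ball; rewrite dxy0 nth_iota // inE => /eqP.
Qed.

Lemma ball_connect d x y : y \in ball e d x -> connect e x y.
Proof.
elim: d y => [|d IHd] y /=; first by rewrite inE => /eqP ->.
rewrite !inE => /orP [/IHd //|/existsP [z /andP [zx zy]]].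
exact: connect_trans (IHd _ zx) (connect1 zy).
Qed.

Lemma convexI (A B : {set T}) : convex e A -> convex e B -> convex e (A :&: B).
Proof.
move=> convA convB u v /setIP [uA uB] /setIP [vA vB].
by rewrite subsetI convA ?convB.
Qed.

End Graph.

Section Lattice.
Variables (k : nat) (m : 'I_k -> nat).
Local Notation L := (lattice_vertex m).
Local Notation e := (@lattice_adj k m).

Definition l1dist (f g : L) := \sum_j distn (f j) (g j).

Lemma lattice_vertexP (f g : L) : (forall j, f j = g j :> nat) -> f = g.
Proof. by move=> fg; apply/ffunP => j; apply: val_inj; exact: fg. Qed.

Lemma l1dist_eq0 (f g : L) : (l1dist f g == 0) = (f == g).
Proof.
rewrite sum_nat_eq0; apply/forallP/eqP => [fg|-> j]; last by rewrite /distn subnn.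
by apply: lattice_vertexP => j; move: (fg j); rewrite /distn; lia.
Qed.

Lemma l1dist_sym (f g : L) : l1dist f g = l1dist g f.
Proof. by apply: eq_bigr => j _; rewrite /distn addnC. Qed.

Lemma l1dist_triangle_leqif (f g h : L) :
  l1dist f h <= l1dist f g + l1dist g h ?= iff [forall j, betweenn (f j) (g j) (h j)].
Proof.
by rewrite /l1dist -big_split; apply: leqif_sum => j _; apply: distn_triangle_leqif.
Qed.

Lemma lattice_adj_l1dist (f g : L) : e f g -> l1dist f g = 1.
Proof.
case/existsP => j /andP [fgj /forallP fg].
rewrite /l1dist (bigD1 j) //= big1 => [|j' /(implyP (fg j')) /eqP fgj'].
  by move: fgj; rewrite /path_adj /distn /= => /orP [] /eqP; lia.
by rewrite fgj' /distn subnn.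
Qed.

Lemma l1dist_pred_adj (f g : L) :
  0 < l1dist f g -> exists2 z : L, l1dist f z = (l1dist f g).-1 & e z g.
Proof.
move=> fg_gt0.
have [j fgj] : exists j, f j != g j :> nat.
  apply/existsP; apply: contraTT fg_gt0 => /existsPn fg.
  by rewrite -leqNgt leqn0 l1dist_eq0; apply/eqP/lattice_vertexP => j; apply/eqP/negbNE.
pose v j' := if j' == j then stepn (f j) (g j) else g j'.
have v_lt j' : v j' < m j'.
  by rewrite /v; case: eqP => [->|_]; rewrite ?stepn_ltn.
pose z : L := [ffun j' => Ordinal (v_lt j')].
exists z.
  rewrite /l1dist (bigD1 j) //= [in RHS](bigD1 j) //= ffunE /= /v eqxx distn_stepn //.
  by congr (_ + _).-1; apply: eq_bigr => j' /negbTE nj; rewrite ffunE /= /v nj.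
apply/existsP; exists j; rewrite /path_adj ffunE /= /v eqxx stepn_adj //=.
by apply/forallP => j'; apply/implyP => nj; rewrite ffunE /= /v (negbTE nj).
Qed.

Lemma ball_lattice d (f : L) : ball e d f = [set g | l1dist f g <= d].
Proof.
elim: d => [|d IHd] /=; apply/setP => g; rewrite !inE.
  by rewrite leqn0 l1dist_eq0 eq_sym.
rewrite IHd inE; apply/idP/idP => [/orP [/leqW //|/existsP [z /andP []]]|].
  rewrite inE => fz /lattice_adj_l1dist zg.
  by have := (l1dist_triangle_leqif f z g).1; lia.
rewrite leq_eqVlt ltnS => /orP [/eqP fg|->//].
have [|z fz zg] := l1dist_pred_adj (f := f) (g := g); first by rewrite fg.
by apply/orP; right; apply/existsP; exists z; rewrite zg inE fz fg andbT.
Qed.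

Lemma l1dist_lt_card (f g : L) : l1dist f g < #|L|.
Proof.
rewrite card_dep_ffun foldrE big_map big_enum /=.
apply: leq_ltn_trans (sum_predn_lt_prod _ _) => [|j]; last first.
  by rewrite card_ord (leq_ltn_trans _ (ltn_ord (f j))).
apply: leq_sum => j _; rewrite card_ord /distn.
by move: (ltn_ord (f j)) (ltn_ord (g j)); lia.
Qed.

Lemma dist_lattice (f g : L) : dist e f g = l1dist f g.
Proof.
rewrite /dist -[RHS](find_iota_leq (l1dist_lt_card f g)).
by apply: eq_find => d; rewrite ball_lattice inE.
Qed.

Lemma interval_lattice (f g h : L) :
  (g \in interval e f h) = [forall j, betweenn (f j) (g j) (h j)].
Proof. by rewrite inE !dist_lattice eq_sym (l1dist_triangle_leqif f g h).2. Qed.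

Lemma lattice_adj_sym : symmetric e.
Proof.
suff adj_sym f g : e f g -> e g f by move=> f g; apply/idP/idP; apply: adj_sym.
case/existsP => j /andP [fgj /forallP fg]; apply/existsP; exists j.
rewrite /path_adj orbC -/(path_adj _ _) fgj /=; apply/forallP => j'.
by apply/implyP => /(implyP (fg j')) /eqP ->.
Qed.

Lemma lattice_median : median_graph e.
Proof.
split; [split|split].
- exact: lattice_adj_sym.
- by move=> f; apply/existsP => -[j /andP [+ _]]; rewrite /path_adj; lia.
- by move=> f g; apply: (@ball_connect _ _ (l1dist f g)); rewrite ball_lattice inE.
move=> u v w.
have med_lt j : median3n (u j) (v j) (w j) < m j by apply: median3n_ltn.
pose c : L := [ffun j => Ordinal (med_lt j)].
apply/eqP/cards1P; exists c; apply/setP => x.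
rewrite !in_setI !interval_lattice in_set1 -andbA.
apply/idP/eqP => [/and3P [/forallP uv /forallP vw /forallP wu]|->].
  by apply: lattice_vertexP => j; rewrite ffunE; apply: betweenn_median3n.
by apply/and3P; split; apply/forallP => j; rewrite ffunE /=;
  case: (median3n_betweenn (u j) (v j) (w j)).
Qed.

End Lattice.

Section MedianGraph.
Variables (T : finType) (e : rel T).
Hypothesis e_median : median_graph e.

Lemma median_exists u v w :
  exists x, [/\ x \in interval e u v, x \in interval e v w & x \in interval e w u].
Proof.
have [_ [_ /(_ u v w) card1]] := e_median.
have /card_gt0P [x] : 0 < #|interval e u v :&: interval e v w :&: interval e w u|.
  by rewrite card1.
by rewrite !in_setI => /andP [/andP [? ?] ?]; exists x.
Qed.

Lemma convex_helly3 (A B C : {set T}) : convex e A -> convex e B -> convex e C ->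
  A :&: B != set0 -> B :&: C != set0 -> C :&: A != set0 -> A :&: B :&: C != set0.
Proof.
move=> convA convB convC /set0Pn [p /setIP [pA pB]] /set0Pn [q /setIP [qB qC]].
case/set0Pn => r /setIP [rC rA]; have [x [pqx qrx rpx]] := median_exists p q r.
apply/set0Pn; exists x; rewrite !in_setI (subsetP (convA _ _ rA pA) _ rpx).
by rewrite (subsetP (convB _ _ pB qB) _ pqx) (subsetP (convC _ _ qC rC) _ qrx).
Qed.

Lemma convex_helly (F : seq {set T}) :
  {in F, forall A, convex e A} -> {in F &, forall A B, A :&: B != set0} ->
  F != [::] -> exists x, {in F, forall A : {set T}, x \in A}.
Proof.
have [N] := ubnP (size F); elim: N F => // N IHN [|A [|B F]] //= sizeF convF meetF _.
  have /set0Pn [x] := meetF A A (mem_head _ _) (mem_head _ _).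
  by rewrite setIid => xA; exists x => C; rewrite inE => /eqP ->.
have inF C : C \in B :: F -> C \in [:: A, B & F].
  by move=> CF; rewrite in_cons CF orbT.
have AF : A \in [:: A, B & F] := mem_head _ _.
have [x xAF] : exists x, {in [seq A :&: C | C <- B :: F], forall D : {set T}, x \in D}.
  apply: IHN; rewrite ?size_map //.
  - by move=> _ /mapP [C /inF CF ->]; apply: convexI; apply: convF.
  - move=> _ _ /mapP [C /inF CF ->] /mapP [D /inF DF ->].
    rewrite setIACA setIid setIA.
    by apply: convex_helly3; first [apply: convF | apply: meetF].
exists x => C; rewrite inE => /predU1P [->|CF].
  by have := xAF _ (map_f _ (mem_head B F)); rewrite inE => /andP [].
by have := xAF _ (map_f _ CF); rewrite inE => /andP [].
Qed.

End MedianGraph.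

Definition bags_of (V M : finType) (X : M -> {set V}) (v : V) : {set M} :=
  [set a | v \in X a].

Lemma card_bag_le_width (V M : finType) (X : M -> {set V}) a : #|X a| <= width X.
Proof. exact: (leq_bigmax (F := fun a => #|X a|)). Qed.

Section MedianDecomposition.
Variables (V M : finType) (eG : rel V) (eM : rel M) (X : M -> {set V}).
Hypothesis dec : median_decomposition eG eM X.

Lemma bags_of_convex v : convex eM (bags_of X v).
Proof. by have [_ [_ /(_ v) []]] := dec. Qed.

Lemma bags_of_neq0 v : bags_of X v != set0.
Proof. by have [_ [_ /(_ v) [[a va] _]]] := dec; apply/set0Pn; exists a; rewrite inE. Qed.

Lemma bags_of_edge u v : eG u v -> bags_of X u :&: bags_of X v != set0.
Proof.
have [_ [cover _]] := dec; case/cover => a [ua va].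
by apply/set0Pn; exists a; rewrite !inE ua va.
Qed.

Lemma bag_superset (S : {set V}) :
  {in S &, forall u v, u != v -> bags_of X u :&: bags_of X v != set0} ->
  S != set0 -> exists a, S \subset X a.
Proof.
move=> meetS /set0Pn [v0 v0S].
have bagsS v : v \in S -> bags_of X v \in [seq bags_of X u | u <- enum S].
  by move=> vS; apply: map_f; rewrite mem_enum.
have [a aS] : exists a, {in [seq bags_of X u | u <- enum S], forall B : {set M}, a \in B}.
  apply: (convex_helly dec.1); last by apply: contraTneq (bagsS _ v0S) => ->.
    by move=> _ /mapP [v _ ->]; apply: bags_of_convex.
  move=> _ _ /mapP [u + ->] /mapP [v + ->]; rewrite !mem_enum => uS vS.
  have [<-|uv] := eqVneq u v; last exact: meetS.
  by rewrite setIid bags_of_neq0.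
by exists a; apply/subsetP => v /bagsS /aS; rewrite inE.
Qed.

End MedianDecomposition.

Lemma clique_lw_ge (V : finType) (eG : rel V) (S : {set V}) i :
  {in S &, forall u v, u != v -> eG u v} -> lw_ge i eG #|S|.
Proof.
move=> cliqueS M eM X [dec _].
have [->|S_neq0] := eqVneq S set0; first by rewrite cards0.
have [|a Sa] := bag_superset dec _ S_neq0.
  by move=> u v uS vS uv; apply: (bags_of_edge dec); apply: cliqueS.
exact: leq_trans (subset_leq_card Sa) (card_bag_le_width X a).
Qed.

Section LatticeEmbedding.
Variables (M : finType) (eM : rel M) (k : nat) (m : 'I_k -> nat).
Variable phi : M -> lattice_vertex m.
Hypothesis eM_median : median_graph eM.
Hypothesis phi_isometric :
  forall x y, dist (@lattice_adj k m) (phi x) (phi y) = dist eM x y.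

(* [dist] is computed from balls around its first argument, so it is not
   obviously symmetric; here symmetry is inherited from the lattice. *)
Lemma dist_embedded_sym x y : dist eM x y = dist eM y x.
Proof. by rewrite -!phi_isometric !dist_lattice l1dist_sym. Qed.

Lemma interval_embedded_betweenn a b c :
  b \in interval eM a c -> forall j, betweenn (phi a j) (phi b j) (phi c j).
Proof.
move=> abc; have : phi b \in interval (@lattice_adj k m) (phi a) (phi c).
  by move: abc; rewrite !inE !phi_isometric.
by rewrite interval_lattice => /forallP.
Qed.

Lemma nearest_in_interval (A : {set M}) x y :
  convex eM A -> x \in A -> (forall z, z \in A -> dist eM x y <= dist eM z y) ->
  forall s, s \in A -> x \in interval eM y s.
Proof.
move=> convA xA x_nearest s sA.
have [z [sxz xyz yzs]] := median_exists eM_median s x y.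
have /x_nearest : z \in A := subsetP (convA _ _ sA xA) _ sxz.
move: xyz; rewrite inE => /eqP <- le_xy.
have /dist_eq0 -> : dist eM x z = 0 by lia.
exact: yzs.
Qed.

Definition separated_at (A B : {set M}) (c : 'I_k) :=
  forall s t, s \in A -> t \in B -> phi s c < phi t c.

Lemma convex_disjoint_separated (A B : {set M}) :
  convex eM A -> convex eM B -> A != set0 -> B != set0 -> A :&: B = set0 ->
  exists c, separated_at A B c \/ separated_at B A c.
Proof.
move=> convA convB /set0Pn [x0 x0A] /set0Pn [y0 y0B] AB0.
pose P (q : M * M) := (q.1 \in A) && (q.2 \in B).
have P0 : P (x0, y0) by rewrite /P x0A y0B.
case: (arg_minnP (fun q : M * M => dist eM q.1 q.2) P0) => -[x y] /andP [/= xA yB] nearest.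
have gateA s : s \in A -> x \in interval eM y s.
  apply: nearest_in_interval => // z zA.
  by apply: (nearest (z, y)); rewrite /P zA yB.
have gateB t : t \in B -> y \in interval eM x t.
  apply: nearest_in_interval => // z zB; rewrite !(dist_embedded_sym _ x).
  by apply: (nearest (x, z)); rewrite /P xA zB.
have [c xyc] : exists c, phi x c != phi y c :> nat.
  apply/existsP; apply: contraT; rewrite negb_exists => /forallP same.
  have phixy : phi x = phi y.
    by apply: lattice_vertexP => j; apply/eqP; rewrite -[_ == _]negbK same.
  have /dist_eq0 xy : dist eM x y = 0.
    by apply/eqP; rewrite -phi_isometric phixy dist_lattice l1dist_eq0.
  by move/setP/(_ y): AB0; rewrite !inE yB -xy xA.
exists c; case: (ltngtP (phi x c) (phi y c)) xyc => // [lt|gt] _.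
  left => s t /gateA/interval_embedded_betweenn/(_ c) yxs.
  by move=> /gateB/interval_embedded_betweenn/(_ c); move: yxs; rewrite /betweenn; lia.
right => t s /gateB/interval_embedded_betweenn/(_ c) xyt.
by move=> /gateA/interval_embedded_betweenn/(_ c); move: xyt; rewrite /betweenn; lia.
Qed.

Lemma separated_at_crossing (A B C D : {set M}) c :
  separated_at A B c -> separated_at C D c ->
  A :&: D != set0 -> B :&: C != set0 -> False.
Proof.
move=> sepAB sepCD /set0Pn [ad /setIP [adA adD]] /set0Pn [bc /setIP [bcB bcC]].
by have := sepAB _ _ adA bcB; have := sepCD _ _ bcC adD; lia.
Qed.

End LatticeEmbedding.

Section CompleteMultipartite.
Variables (p : nat) (n : 'I_p -> nat).
Hypothesis n_gt0 : forall j, 0 < n j.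
Local Notation K := (Kvert n).
Local Notation eK := (@Kadj p n).

Definition part (j : 'I_p) : {set K} := [set v | tag v == j].

Lemma card_part j : #|part j| = n j.
Proof.
have -> : part j = [set Tagged (fun j => 'I_(n j)) x | x : 'I_(n j)].
  apply/setP => v; rewrite inE; apply/eqP/imsetP => [|[x _ ->] //].
  by case: v => j' x /= <-; exists x.
by rewrite card_imset ?cardsT ?card_ord //; apply: eq_from_Tagged.
Qed.

Definition part_rep j : K := Tagged (fun j => 'I_(n j)) (Ordinal (n_gt0 j)).

Lemma lw_ge_Kadj_parts i : lw_ge i eK p.
Proof.
have card_reps : #|[set part_rep j | j : 'I_p]| = p.
  by rewrite card_imset ?cardsT ?card_ord // => j j' /(congr1 tag).
suff : lw_ge i eK #|[set part_rep j | j : 'I_p]| by rewrite card_reps.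
apply: clique_lw_ge => _ _ /imsetP [j _ ->] /imsetP [j' _ ->].
by apply: contra_neq => /= ->.
Qed.

Definition Kbag (f : lattice_vertex n) : {set K} := [set v | tagged v == f (tag v)].

Lemma card_Kbag f : #|Kbag f| = p.
Proof.
have -> : Kbag f = [set Tagged (fun j => 'I_(n j)) (f j) | j : 'I_p].
  apply/setP => v; rewrite inE; apply/eqP/imsetP => [|[j _ ->] //].
  by case: v => j x /= ->; exists j.
by rewrite card_imset ?cardsT ?card_ord // => j j' /(congr1 tag).
Qed.

Definition Kbag_through_val (u v : K) (j : 'I_p) : nat :=
  if j == tag u then val (tagged u) else if j == tag v then val (tagged v) else 0.

Lemma Kbag_through_val_lt u v j : Kbag_through_val u v j < n j.
Proof.
rewrite /Kbag_through_val; case: eqP => [->|_]; first exact: ltn_ord.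
by case: eqP => [->|_]; [exact: ltn_ord | exact: n_gt0].
Qed.

Definition Kbag_through (u v : K) : lattice_vertex n :=
  [ffun j => Ordinal (Kbag_through_val_lt u v j)].

Lemma Kbag_through_l u v : u \in Kbag (Kbag_through u v).
Proof. by rewrite inE; apply/eqP/val_inj; rewrite ffunE /= /Kbag_through_val eqxx. Qed.

Lemma Kbag_through_r u v : tag u != tag v -> v \in Kbag (Kbag_through u v).
Proof.
move=> uv; rewrite inE; apply/eqP/val_inj.
by rewrite ffunE /= /Kbag_through_val eq_sym (negbTE uv) eqxx.
Qed.

Lemma Kbag_convex v : convex (@lattice_adj p n) (bags_of Kbag v).
Proof.
move=> f g; rewrite !inE => /eqP fv /eqP gv; apply/subsetP => h.
rewrite interval_lattice inE => /forallP /(_ (tag v)).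
by rewrite -fv -gv inE => /betweenn_same hv; apply/eqP/val_inj.
Qed.

Lemma Kbag_lattice_decomposition :
  lattice_decomposition p eK (@lattice_adj p n) Kbag.
Proof.
split; last by exists p; split=> //; exists n, id.
split; first exact: lattice_median.
split=> [u v uv|v].
  by exists (Kbag_through u v); rewrite Kbag_through_l Kbag_through_r.
by split; [exists (Kbag_through v v); apply: Kbag_through_l | apply: Kbag_convex].
Qed.

Lemma width_Kbag : width Kbag = p.
Proof.
apply/eqP; rewrite eqn_leq; apply/andP; split.
  by apply/bigmax_leqP => f _; rewrite card_Kbag.
by have := card_bag_le_width Kbag [ffun j => Ordinal (n_gt0 j)]; rewrite card_Kbag.
Qed.

Lemma lw_eq_Kadj_parts : lw_eq p eK p.
Proof.
split; first exact: lw_ge_Kadj_parts.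
exists (lattice_vertex n), (@lattice_adj p n), Kbag.
by split; [exact: Kbag_lattice_decomposition | exact: width_Kbag].
Qed.

Definition part_covered (M : finType) (X : M -> {set K}) j :=
  [forall u in part j, forall v in part j, bags_of X u :&: bags_of X v != set0].

Lemma covered_part_wide_bag (M : finType) (eM : rel M) (X : M -> {set K}) j j' :
  median_decomposition eK eM X -> j' != j -> part_covered X j -> n j < width X.
Proof.
move=> dec j'j /forall_inP covered.
pose S := part_rep j' |: part j.
have [a Sa] : exists a, S \subset X a.
  apply: (bag_superset dec); last by apply/set0Pn; exists (part_rep j'); rewrite setU11.
  move=> u v; rewrite !in_setU1 => /predU1P [->|uj] /predU1P [->|vj] uv.
  - by rewrite eqxx in uv.
  - by apply: (bags_of_edge dec); move: vj; rewrite /Kadj inE => /eqP ->.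
  - by apply: (bags_of_edge dec); move: uj; rewrite /Kadj inE => /eqP ->; rewrite eq_sym.
  - by move/forall_inP: (covered u uj) => /(_ v vj).
apply: leq_trans (card_bag_le_width X a); apply: leq_trans (subset_leq_card Sa).
by rewrite cardsU1 card_part inE /= (negbTE j'j).
Qed.

Lemma uncovered_part_separated (M : finType) (eM : rel M) (X : M -> {set K})
    k (m : 'I_k -> nat) (phi : M -> lattice_vertex m) j :
  median_decomposition eK eM X ->
  (forall x y, dist (@lattice_adj k m) (phi x) (phi y) = dist eM x y) ->
  ~~ part_covered X j ->
  exists c, exists u v,
    [/\ u \in part j, v \in part j & separated_at phi (bags_of X u) (bags_of X v) c].
Proof.
move=> dec phi_iso /forall_inPn [u uj /forall_inPn [v vj /negPn /eqP uv0]].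
have convex_bags w : convex eM (bags_of X w) := @bags_of_convex _ _ _ _ _ dec w.
have [c [sep|sep]] := convex_disjoint_separated dec.1 phi_iso (convex_bags u)
  (convex_bags v) (bags_of_neq0 dec u) (bags_of_neq0 dec v) uv0.
- by exists c, u, v.
- by exists c, v, u.
Qed.

Lemma parts_separated_apart (M : finType) (eM : rel M) (X : M -> {set K})
    k (m : 'I_k -> nat) (phi : M -> lattice_vertex m) j1 j2 c u1 v1 u2 v2 :
  median_decomposition eK eM X -> j1 != j2 ->
  u1 \in part j1 -> v1 \in part j1 -> u2 \in part j2 -> v2 \in part j2 ->
  separated_at phi (bags_of X u1) (bags_of X v1) c ->
  separated_at phi (bags_of X u2) (bags_of X v2) c -> False.
Proof.
move=> dec j12 u1j v1j u2j v2j sep1 sep2; apply: (separated_at_crossing sep1 sep2).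
  by apply: (bags_of_edge dec); move: u1j v2j; rewrite /Kadj !inE => /eqP -> /eqP ->.
by apply: (bags_of_edge dec); move: v1j u2j; rewrite /Kadj !inE => /eqP -> /eqP ->.
Qed.

Lemma Kadj_lattice_decomposition_width_gt_part i (M : finType) (eM : rel M)
    (X : M -> {set K}) :
  i < p -> 1 < p -> lattice_decomposition i eK eM X -> exists j, n j < width X.
Proof.
move=> ltip gt1p [dec [k [le_ki [m [phi phi_iso]]]]].
case: (boolP [exists j, part_covered X j]) => [/existsP [j covered] | /existsPn uncovered].
  have [j' j'j] : exists j' : 'I_p, j' != j.
    have [j0|] := eqVneq (Ordinal (ltnW gt1p)) j; last by exists (Ordinal (ltnW gt1p)).
    by exists (Ordinal gt1p); rewrite -j0.
  by exists j; apply: covered_part_wide_bag dec j'j covered.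
have [c sepc] :=
  fin_all_exists (fun j => uncovered_part_separated dec phi_iso (uncovered j)).
have /injectivePn [j1 [j2 j12 c12]] : ~~ injectiveb c.
  by apply/injectiveP => /leq_card; rewrite !card_ord; lia.
have [u1 [v1 [u1j v1j sep1]]] := sepc j1.
have [u2 [v2 [u2j v2j sep2]]] := sepc j2.
by rewrite c12 in sep1; case: (parts_separated_apart dec j12 u1j v1j u2j v2j sep1 sep2).
Qed.

End CompleteMultipartite.

Theorem mainTheorem2 (i : nat) (n : 'I_i.+1 -> nat) :
  1 <= i -> (forall j, 0 < n j) ->
  lw_ge i (@Kadj i.+1 n) ((\big[minn/n ord0]_(j < i.+1) n j) + 1) /\
  lw_eq i.+1 (@Kadj i.+1 n) i.+1.
Proof.
move=> i_gt0 n_gt0; split; last exact: lw_eq_Kadj_parts.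
move=> M eM X dec.
have [j ltjw] := Kadj_lattice_decomposition_width_gt_part n_gt0 (ltnSn i) i_gt0 dec.
by rewrite addn1 (leq_ltn_trans _ ltjw) // -minEnat -leEnat Order.TotalTheory.bigmin_le.
Qed.
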